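(* Let $S=\{R_0,\dots,R_d\}$ be a quasi-thin scheme on $X$, $\mathbb F$ a field, $x\in X$, $E_a^*=E_a^*(x)$, and let $\mathcal T_0$ be the $\mathbb F$-linear span of $\{E_i^*A_jE_\ell^*:R_i,R_j,R_\ell\in S\}$. Then $\mathcal T_0$ is a unital $\mathbb F$-subalgebra of $M_X(\mathbb F)$ if and only if there do not exist $R_u,R_v,R_w,R_y,R_z\in S$ with $k_u=k_v=k_w=k_y=k_z=2$ and $p_{uv}^w=p_{wy}^z=|R_{u'}R_z|=1$.
   Context: Let $X$ be a nonempty finite set. A scheme of class $d$ on $X$ is a partition $S=\{R_0,\dots,R_d\}$ of $X\times X$ into nonempty sets such that $R_0=\{(b,b):b\in X\}$; for each $c$ there is $c'$ with $R_{c'}=\{(f,e):(e,f)\in R_c\}$; and for all $i,j,k$ the intersection number $p_{ij}^k=|\{\ell\in X:(m,\ell)\in R_i,(\ell,n)\in R_j\}|$ does not depend on $(m,n)\in R_k$. The valency is $k_a=p_{aa'}^0$; quasi-thin means all $k_a\le2$; complex product $R_aR_b=\{R_c:p_{ab}^c>0\}$. For $y\in X$, $yR_a=\{z:(y,z)\in R_a\}$. $A_a\in M_X(\mathbb F)$ is the $(0,1)$ adjacency matrix of $R_a$ and $E_a^*(y)$ is the diagonal $(0,1)$-matrix with ones exactly at positions indexed by $yR_a$. *)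

From HB Require Import structures.
From mathcomp Require Import all_boot all_order all_algebra.
Set Implicit Arguments. Unset Strict Implicit. Unset Printing Implicit Defensive.
Import GRing.Theory.
Local Open Scope ring_scope.

(* The finite nonempty set X is 'I_n.+1.  A scheme of class d is encoded by
   its "relation index" function r : X -> X -> 'I_d.+1, where R_c = {(e,f) | r e f = c}. *)

Section Scheme.
Variables (n d : nat).
Notation X := 'I_n.+1.
Notation I := 'I_d.+1.
Variable r : X -> X -> I.

Definition pcount (i j : I) (m o : X) : nat :=
  #|[set l : X | (r m l == i) && (r l o == j)]|.

Definition is_scheme : Prop :=
  [/\ (forall c : I, exists m o : X, r m o = c),
      (forall m o : X, (r m o == ord0) = (m == o)),
      (forall c : I, exists c' : I, forall e f : X, (r e f == c) = (r f e == c')) &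
      (forall (i j k : I) (m o m' o' : X), r m o = k -> r m' o' = k ->
          pcount i j m o = pcount i j m' o')].

Definition pnum (i j k : I) : nat :=
  if [pick mo : X * X | r mo.1 mo.2 == k] is Some mo then pcount i j mo.1 mo.2 else 0%N.

Definition tr (c : I) : I :=
  if [pick mo : X * X | r mo.1 mo.2 == c] is Some mo then r mo.2 mo.1 else c.

Definition valency (a : I) : nat := pnum a (tr a) ord0.

Definition quasi_thin : Prop := forall a : I, (valency a <= 2)%N.

Definition cprod (a b : I) : {set I} := [set c : I | (0 < pnum a b c)%N].

Variable F : fieldType.

Definition adj (a : I) : 'M[F]_n.+1 := \matrix_(e, f) ((r e f == a)%:R).

Definition dualidem (x : X) (a : I) : 'M[F]_n.+1 :=
  \matrix_(e, f) (((e == f) && (r x e == a))%:R).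

(* T_0 : F-span of {E_i^* A_j E_l^*}, encoded (mxalgebra style) as a row space of
   vectorized matrices *)
Definition T0 (x : X) : 'A[F]_(n.+1) :=
  (\sum_(ijl : I * I * I)
     <<mxvec (dualidem x ijl.1.1 *m adj ijl.1.2 *m dualidem x ijl.2)>>)%MS.

(* V is a unital F-subalgebra of M_X(F): contains the identity and is closed
   under products (it is a subspace by construction) *)
Definition unital_subalgebra (V : 'A[F]_(n.+1)) : Prop :=
  (1%:M \in V)%MS /\
  (forall M N : 'M[F]_n.+1, (M \in V)%MS -> (N \in V)%MS -> (M *m N \in V)%MS).

End Scheme.

(* The matrices E_i^* A_j E_l^* are the indicator matrices of the cells
   {(a, b) | (r x a, r a b, r x b) = (i, j, l)}, so T0 is the space of
   cell-constant matrices.  It always contains the identity, and it is closed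
   under products iff each product E_i^* A_j E_l^* E_l^* A_j' E_k^* is
   cell-constant, i.e. iff the number of c in x R_l with (a, c) in R_j and
   (c, b) in R_j' depends only on the cell of (a, b).  That number is
   |S(a) :&: T(b)| for subsets S(a), T(b) of x R_l whose sizes depend only on
   the cell; as |x R_l| <= 2 it can vary only if |S(a)| = |T(b)| = 1 and
   k_l = 2.  Double counting then gives k_i = k_j = k_j' = k_k = 2 and
   p_{ij}^l = p_{lj'}^k = 1, and two pairs of the cell with different counts
   must share an endpoint, which forces R_i' R_k = {R_j}.  Conversely, such a
   configuration yields two pairs of one cell with counts 1 and 0. *)

From mathcomp Require Import all_boot all_order all_algebra zify.

Set Implicit Arguments.
Unset Strict Implicit.
Unset Printing Implicit Defensive.

Import GRing.Theory.

Section FinsetCounting.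
Variable T : finType.
Implicit Types C S U : {set T}.

Lemma double_count_const (A B : {set T}) (R : rel T) k1 k2 :
  {in A, forall a, #|B :&: [set b | R a b]| = k1} ->
  {in B, forall b, #|A :&: [set a | R a b]| = k2} ->
  #|A| * k1 = #|B| * k2.
Proof.
have card_sum (D : {set T}) (P : pred T) :
    #|D :&: [set t | P t]| = \sum_(t in D) P t.
  rewrite -sum1_card big_mkcond [RHS]big_mkcond /=.
  by apply: eq_bigr => t _; rewrite !inE; case: (t \in D); case: (P t).
move=> hA hB; rewrite -!sum_nat_const.
transitivity (\sum_(a in A) \sum_(b in B) R a b).
  by apply: eq_bigr => a /hA <-; rewrite card_sum.
by rewrite exchange_big; apply: eq_bigr => b /hB <-; rewrite card_sum.
Qed.

Lemma cardsI_le2 C S S' U U' :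
    S \subset C -> S' \subset C -> U \subset C -> U' \subset C -> #|C| <= 2 ->
    #|S| = #|S'| -> #|U| = #|U'| -> #|S :&: U| != #|S' :&: U'| ->
  [/\ #|S| = 1, #|U| = 1 & #|C| = 2].
Proof.
move=> sSC sS'C sUC sU'C C2 eS eU.
have full (D : {set T}) : D \subset C -> #|D| = #|C| -> D = C.
  by move=> sDC hD; apply/eqP; rewrite eqEcard sDC hD leqnn.
have empty (D : {set T}) : #|D| = 0 -> D = set0.
  by move/eqP; rewrite cards_eq0 => /eqP.
case: (posnP #|S|) => [S0|S_gt0].
  by rewrite (empty _ S0) (empty S') -?eS // !set0I eqxx.
case: (posnP #|U|) => [U0|U_gt0].
  by rewrite (empty _ U0) (empty U') -?eU // !setI0 eqxx.
case: (eqVneq #|S| #|C|) => [SC|SnC].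
  rewrite (full _ sSC SC) (full S') -?eS //.
  by rewrite (setIidPr sUC) (setIidPr sU'C) eU eqxx.
case: (eqVneq #|U| #|C|) => [UC|UnC].
  rewrite (full _ sUC UC) (full U') -?eU //.
  by rewrite (setIidPl sSC) (setIidPl sS'C) eS eqxx.
move: (subset_leq_card sSC) (subset_leq_card sUC) => leS leU _; split; lia.
Qed.

Lemma setIIrA C S U : C :&: S :&: U = (C :&: S) :&: (C :&: U).
Proof. by rewrite -setIIr setIA. Qed.

Lemma cards1I (e : T) A : #|[set e] :&: A| = (e \in A).
Proof.
case: (boolP (e \in A)) => [eA | eNA].
  by rewrite (setIidPl _) ?cards1 ?sub1set.
by apply/eqP; rewrite cards_eq0 setI_eq0 disjoints1.
Qed.

Lemma card2_set2 C (s s' : T) :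
  #|C| = 2 -> s \in C -> s' \in C -> s != s' -> C = [set s; s'].
Proof.
move=> C2 sC s'C ss'.
by apply/esym/eqP; rewrite eqEcard subUset !sub1set sC s'C cards2 ss' C2.
Qed.

Lemma eq_swap_card2 C (s s' t t' : T) :
    #|C| = 2 -> s \in C -> s' \in C -> t \in C -> t' \in C ->
    s != s' -> t != t' ->
  (s == t) = (s' == t').
Proof.
move=> C2 sC s'C tC t'C ss'.
move: tC t'C; rewrite (card2_set2 C2 sC s'C ss') !inE.
by do 2!case/orP=> /eqP->; rewrite ?eqxx // eq_sym (negbTE ss').
Qed.

End FinsetCounting.

Section Scheme.
Variables n d : nat.
Local Notation X := 'I_n.+1.
Local Notation I := 'I_d.+1.
Variable r : X -> X -> I.
Hypothesis Hsch : is_scheme r.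

Definition nb (e : X) (a : I) : {set X} := [set f | r e f == a].

Lemma r_diag e : r e e = ord0.
Proof. by case: Hsch => _ diag _ _; apply/eqP; rewrite diag. Qed.

Lemma eq_tr c e f : (r e f == c) = (r f e == tr r c).
Proof.
case: Hsch => nonempty _ transp _; have [c' Hc'] := transp c.
rewrite /tr; case: pickP => [[m o] /= | none].
  by rewrite !Hc' => /eqP ->.
by have [m [o mo]] := nonempty c; have := none (m, o); rewrite /= mo eqxx.
Qed.

Lemma r_tr e f : r f e = tr r (r e f).
Proof. by apply/eqP; rewrite -eq_tr. Qed.

Lemma nb_tr c j : nb c (tr r j) = [set e | r e c == j].
Proof. by apply/setP => e; rewrite !inE [RHS]eq_tr. Qed.

Lemma pnumE i j m o : pnum r i j (r m o) = pcount r i j m o.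
Proof.
case: Hsch => _ _ _ regular; rewrite /pnum; case: pickP => [[m' o'] /= /eqP h|].
  exact: regular h erefl.
by move/(_ (m, o)); rewrite /= eqxx.
Qed.

Lemma pcount_cell i j m o m' o' :
  r m o = r m' o' -> pcount r i j m o = pcount r i j m' o'.
Proof. by rewrite -!pnumE => ->. Qed.

Lemma pcountE i j m o : pcount r i j m o = #|nb m i :&: nb o (tr r j)|.
Proof. by rewrite nb_tr; apply: eq_card => f; rewrite !inE. Qed.

Lemma pcount_trE i j m o : pcount r i (tr r j) m o = #|nb m i :&: nb o j|.
Proof. by apply: eq_card => f; rewrite !inE [r o f == _]eq_tr. Qed.

Lemma cardsI_nb_cell i j m o m' o' :
  r m o = r m' o' -> #|nb m i :&: nb o j| = #|nb m' i :&: nb o' j|.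
Proof. by rewrite -!pcount_trE => /pcount_cell ->. Qed.

Lemma card_nb e a : #|nb e a| = valency r a.
Proof. by rewrite /valency -(r_diag e) pnumE pcount_trE setIid. Qed.

Lemma valency_tr a : valency r (tr r a) = valency r a.
Proof.
have dc := @double_count_const _ [set: X] [set: X] (fun e f => r e f == a)
  (valency r a) (valency r (tr r a)).
rewrite cardsT card_ord in dc.
apply/eqP; rewrite -(eqn_pmul2l (ltn0Sn n)) dc // => [e _ | f _];
  by rewrite setTI -?nb_tr card_nb.
Qed.

Lemma valency_cardsI x i l j e c : r x e = i -> r x c = l ->
  valency r i * #|nb x l :&: nb e j| = valency r l * #|nb x i :&: nb c (tr r j)|.
Proof.
move=> <- <-; rewrite -(card_nb x (r x e)) -(card_nb x (r x c)) nb_tr.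
apply: (double_count_const (R := fun e c => r e c == j)) => [e' | c'];
  rewrite inE => /eqP he'.
  by apply: cardsI_nb_cell; rewrite he'.
by rewrite -!nb_tr; apply: cardsI_nb_cell; rewrite he'.
Qed.

Lemma cprod_witness a b c :
  c \in cprod r a b -> exists m g o, [/\ r m g = a, r g o = b & r m o = c].
Proof.
rewrite inE /pnum; case: pickP => [[m o] /= /eqP mo | _] //.
by case/card_gt0P => g; rewrite inE => /andP[/eqP mg /eqP go]; exists m, g, o.
Qed.

Lemma mem_cprod m g o : r m o \in cprod r (r m g) (r g o).
Proof. by rewrite inE pnumE; apply/card_gt0P; exists g; rewrite inE !eqxx. Qed.

Lemma cprod_tr_row x i l t e :
  t \in cprod r (tr r i) l -> r x e = i -> exists2 f, r x f = l & r e f = t.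
Proof.
case/cprod_witness => m [g [o [mg go mo]]] xe.
have : 0 < pcount r t (tr r l) e x.
  rewrite (@pcount_cell _ _ _ _ m g); last by rewrite mg (r_tr x e) xe.
  by apply/card_gt0P; exists o; rewrite inE mo -eq_tr go !eqxx.
by case/card_gt0P => f; rewrite inE -eq_tr => /andP[/eqP ef /eqP xf]; exists f.
Qed.

Lemma cprod_tr_col x i l t f :
  t \in cprod r (tr r i) l -> r x f = l -> exists2 e, r x e = i & r e f = t.
Proof.
case/cprod_witness => m [g [o [mg go mo]]] xf.
have : 0 < pcount r i t x f.
  rewrite (@pcount_cell _ _ _ _ g o); last by rewrite go xf.
  by apply/card_gt0P; exists m; rewrite inE mo eq_tr mg !eqxx.
by case/card_gt0P => e; rewrite inE => /andP[/eqP xe /eqP ef]; exists e.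
Qed.

Lemma pnum1_uniq x i j l c e e' :
    pnum r i j l = 1 -> r x c = l ->
    r x e = i -> r e c = j -> r x e' = i -> r e' c = j ->
  e = e'.
Proof.
move=> p1 xc xe ec xe' e'c.
have : #|nb x i :&: nb c (tr r j)| <= 1 by rewrite -pcountE -pnumE xc p1.
by move/card_le1_eqP; apply; rewrite nb_tr !inE ?xe ?xe' ?ec ?e'c !eqxx.
Qed.

Definition forbidden_config : Prop :=
  exists u v w y z : I,
    [/\ valency r u = 2, valency r v = 2, valency r w = 2,
        valency r y = 2 & valency r z = 2] /\
    [/\ pnum r u v w = 1, pnum r w y z = 1 & #|cprod r (tr r u) z| = 1].

Section BasePoint.
Variable x : X.
Hypothesis Hqt : quasi_thin r.

Definition cell (a b : X) : I * I * I := (r x a, r a b, r x b).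

Lemma nb_sub_valency_le1 (A : {set X}) a j :
  valency r j <= 1 -> 0 < #|A :&: nb a j| -> nb a j \subset A.
Proof.
rewrite -(card_nb a) => /card_le1_eqP nb1 /card_gt0P[c /setIP[cA ca]].
by apply/subsetP => f fa; rewrite (nb1 _ _ ca fa).
Qed.

Lemma count_mismatch_left l0 j1 j2 a b a' b' :
    r x a = r x a' -> r a b = r a' b' -> r x b = r x b' ->
    #|nb x l0 :&: nb a j1 :&: nb b j2| != #|nb x l0 :&: nb a' j1 :&: nb b' j2| ->
  [/\ valency r l0 = 2, valency r (r x a) = 2, valency r j1 = 2,
      #|nb x l0 :&: nb a j1| = 1 & pnum r (r x a) j1 l0 = 1].
Proof.
move=> ea eab eb hne.
have C_le2 : #|nb x l0| <= 2 by rewrite card_nb.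
have [Sa1 _ C2] : [/\ #|nb x l0 :&: nb a j1| = 1, #|nb x l0 :&: nb b j2| = 1
                    & #|nb x l0| = 2].
  apply: (cardsI_le2 (subsetIl _ _) (subsetIl _ _) (subsetIl _ _) (subsetIl _ _)
    C_le2 (cardsI_nb_cell _ _ ea) (cardsI_nb_cell _ _ eb)).
  by rewrite -!setIIrA.
have [c] : exists c, c \in nb x l0 :&: nb a j1 by apply/card_gt0P; rewrite Sa1.
rewrite !inE => /andP[/eqP xc _].
have pa : pnum r (r x a) j1 l0 = #|nb x (r x a) :&: nb c (tr r j1)|.
  by rewrite -xc pnumE pcountE.
have a_xa : 0 < valency r (r x a).
  by rewrite -(card_nb x); apply/card_gt0P; exists a; rewrite inE.
have count_a := valency_cardsI j1 (erefl (r x a)) xc.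
rewrite Sa1 -(card_nb x l0) C2 -pa in count_a.
have [va pa1] : valency r (r x a) = 2 /\ pnum r (r x a) j1 l0 = 1.
  by have := Hqt (r x a); lia.
split=> //; first by rewrite -(card_nb x).
(* If k_j1 <= 1 then a R_j1 lies in x R_l0, so the count is p_{j1 j2'}^{r a b}. *)
have := Hqt j1; rewrite leq_eqVlt ltnS => /orP[/eqP // | vj1]; move: hne.
have full e : r x e = r x a -> nb x l0 :&: nb e j1 = nb e j1.
  move=> xe; apply/setIidPr/nb_sub_valency_le1 => //.
  by rewrite (cardsI_nb_cell _ _ xe) Sa1.
by rewrite !full // (cardsI_nb_cell _ _ eab) eqxx.
Qed.

Lemma count_mismatch_shared_end l0 j1 j2 a b a' b' :
    valency r l0 = 2 ->
    #|nb x l0 :&: nb a j1| = 1 -> pnum r (r x a) j1 l0 = 1 -> r x a = r x a' ->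
    #|nb x l0 :&: nb b j2| = 1 -> pnum r (r x b) j2 l0 = 1 -> r x b = r x b' ->
    #|nb x l0 :&: nb a j1 :&: nb b j2| != #|nb x l0 :&: nb a' j1 :&: nb b' j2| ->
  a = a' \/ b = b'.
Proof.
move=> C2 Sa1 pa ea Sb1 pb eb hne.
have single e j : #|nb x l0 :&: nb e j| = 1 ->
    exists2 c, nb x l0 :&: nb e j = [set c] & r x c = l0 /\ r e c = j.
  move/eqP/cards1P=> [c Sc]; exists c => //.
  by move: (set11 c); rewrite -Sc !inE => /andP[/eqP ? /eqP ?].
have [c Sa [xc ac]] := single a j1 Sa1.
have [c' Sa' [xc' a'c']] :=
  single a' j1 (etrans (cardsI_nb_cell _ _ (esym ea)) Sa1).
have [t Sb [xt bt]] := single b j2 Sb1.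
have [t' Sb' [xt' b't']] :=
  single b' j2 (etrans (cardsI_nb_cell _ _ (esym eb)) Sb1).
(* The singletons x R_l0 :&: a R_j1 and x R_l0 :&: a' R_j1 of the pair x R_l0
   are distinct when a != a' since pnum (r x a) j1 l0 = 1, and likewise for
   b, b'; then the two counts agree. *)
case: (eqVneq a a') => [|na]; [by left | right].
apply/eqP; apply: contraNT hne => nb'.
rewrite (setIIrA _ (nb a j1)) (setIIrA _ (nb a' j1)) Sa Sa' Sb Sb' !cards1I !inE.
apply/eqP; congr (nat_of_bool _); apply: (eq_swap_card2 (C := nb x l0));
  rewrite ?card_nb ?inE ?xc ?xc' ?xt ?xt' //.
  apply: contraNneq na => cc'.
  by apply/eqP; apply: (pnum1_uniq pa xc) => //; rewrite -?ea ?cc'.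
apply: contraNneq nb' => tt'.
by apply/eqP; apply: (pnum1_uniq pb xt) => //; rewrite -?eb ?tt'.
Qed.

Lemma cprod_tr_set1 a b a' b' :
    valency r (r x a) = 2 -> valency r (r x b) = 2 -> cell a b = cell a' b' ->
    (a, b) != (a', b') -> a = a' \/ b = b' ->
  cprod r (tr r (r x a)) (r x b) = [set r a b].
Proof.
move=> va vb [ea eab eb] ne shared; apply/eqP.
have j_in : r a b \in cprod r (tr r (r x a)) (r x b) by rewrite -r_tr mem_cprod.
rewrite eqEsubset sub1set j_in andbT.
apply/subsetP => t ht; rewrite inE; case: shared => [aa' | bb'].
  have [f xf <-] := cprod_tr_row ht (erefl (r x a)).
  have nbb : b != b' by apply: contraNneq ne => <-; rewrite aa'.
  have : f \in nb x (r x b) by rewrite inE xf.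
  rewrite (@card2_set2 _ (nb x (r x b)) _ _ _ _ _ nbb) ?inE -?eb ?card_nb //.
  by case/orP=> /eqP->; rewrite // eab aa'.
have [e xe <-] := cprod_tr_col ht (erefl (r x b)).
have naa : a != a' by apply: contraNneq ne => <-; rewrite bb'.
have : e \in nb x (r x a) by rewrite inE xe.
rewrite (@card2_set2 _ (nb x (r x a)) _ _ _ _ _ naa) ?inE -?ea ?card_nb //.
by case/orP=> /eqP->; rewrite // eab bb'.
Qed.

Lemma count_mismatch_config l0 j1 j2 a b a' b' :
    cell a b = cell a' b' ->
    #|nb x l0 :&: nb a j1 :&: nb b j2| != #|nb x l0 :&: nb a' j1 :&: nb b' j2| ->
  forbidden_config.
Proof.
move=> e_cell hne; have [ea eab eb] := e_cell.
have [C2 va vj1 Sa1 pa] := count_mismatch_left ea eab eb hne.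
(* The facts on the side of b are those on the side of a for the transposed
   pairs (b, a) and (b', a'). *)
have eba : r b a = r b' a' by rewrite (r_tr a b) (r_tr a' b') eab.
have [_ vb vj2 Sb1 pb] : [/\ valency r l0 = 2, valency r (r x b) = 2,
    valency r j2 = 2, #|nb x l0 :&: nb b j2| = 1 & pnum r (r x b) j2 l0 = 1].
  apply: (count_mismatch_left (j2 := j1) eb eba ea).
  by rewrite setIAC (setIAC _ (nb b' j2)).
have shared := count_mismatch_shared_end C2 Sa1 pa ea Sb1 pb eb hne.
have ne : (a, b) != (a', b') by apply: contraNneq hne => -[<- <-].
have cprod1 := cprod_tr_set1 va vb e_cell ne shared.
exists (r x a), j1, l0, (tr r j2), (r x b); split; split => //.
- by rewrite valency_tr.
- by rewrite pnumE pcount_trE.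
by rewrite cprod1 cards1.
Qed.

Lemma config_count_mismatch u v w y z :
    valency r u = 2 -> valency r w = 2 -> valency r z = 2 ->
    pnum r u v w = 1 -> pnum r w y z = 1 -> #|cprod r (tr r u) z| = 1 ->
  exists a b b', [/\ r x a = u, r x b = z, cell a b = cell a b',
    #|nb x w :&: nb a v :&: nb b (tr r y)| = 1 &
    #|nb x w :&: nb a v :&: nb b' (tr r y)| = 0].
Proof.
move=> vu vw vz puv pwy cp.
have point j : valency r j = 2 -> exists e, r x e = j.
  rewrite -(card_nb x) => vj; have /card_gt0P[e] : 0 < #|nb x j| by rewrite vj.
  by rewrite inE => /eqP; exists e.
have [a xa] := point u vu; have [c0 xc0] := point w vw.
have [b0 xb0] := point z vz.
have /eqP/cards1P[c Sa] : #|nb x w :&: nb a v| = 1.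
  by have := valency_cardsI v xa xc0; rewrite vu vw -pcountE -pnumE xc0 puv; lia.
have [xc ac] : r x c = w /\ r a c = v.
  by move: (set11 c); rewrite -Sa !inE => /andP[/eqP ? /eqP ?].
have /eqP/cards1P[b Tc] : #|nb x z :&: nb c y| = 1.
  by have := valency_cardsI y xc xb0; rewrite vw vz -pcountE -pnumE xb0 pwy; lia.
have [xb cb] : r x b = z /\ r c b = y.
  by move: (set11 b); rewrite -Tc !inE => /andP[/eqP ? /eqP ?].
have [b' xb' nb'] : exists2 b', r x b' = z & b' != b.
  have /card_gt0P[b' /setD1P[nb' /[!inE]/eqP xb']] : 0 < #|nb x z :\ b|.
    by have := cardsD1 b (nb x z); rewrite card_nb vz inE xb eqxx; lia.
  by exists b'.
have count f : #|nb x w :&: nb a v :&: nb f (tr r y)| = (r c f == y).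
  by rewrite Sa cards1I inE -eq_tr.
exists a, b, b'; split; rewrite ?count ?cb ?eqxx //.
  rewrite /cell xb xb'; congr (_, _, _).
  have mem_uz f : r x f = z -> r a f \in cprod r (tr r u) z.
    by move=> <-; rewrite -xa -r_tr mem_cprod.
  have /card_le1_eqP : #|cprod r (tr r u) z| <= 1 by rewrite cp.
  by apply; apply: mem_uz.
apply/eqP; rewrite eqb0; apply: contra nb' => /eqP cb'.
by rewrite -in_set1 -Tc !inE xb' cb' !eqxx.
Qed.

Section Matrices.
Variable F : fieldType.
Local Open Scope ring_scope.

Definition EAE (t : I * I * I) : 'M[F]_n.+1 :=
  dualidem r F x t.1.1 *m adj r F t.1.2 *m dualidem r F x t.2.

Definition cell_constant (M : 'M[F]_n.+1) : Prop :=
  forall a b a' b', cell a b = cell a' b' -> M a b = M a' b'.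

Lemma dualidem_diag a : dualidem r F x a = diag_mx (\row_e (r x e == a)%:R).
Proof.
apply/matrixP => e f; rewrite !mxE.
by case: eqVneq => [->|]; rewrite ?mulr1n ?mulr0n.
Qed.

Lemma EAE_entry t a b : EAE t a b = (cell a b == t)%:R.
Proof.
case: t => [[i j] l]; rewrite /EAE !dualidem_diag mul_mx_diag mul_diag_mx !mxE.
by rewrite -!natrM !mulnb /cell !xpair_eqE.
Qed.

Lemma EAE_mul_entry i j l l' j' k a b :
  (EAE (i, j, l) *m EAE (l', j', k)) a b =
  ((r x a == i) && (l == l') && (r x b == k))%:R *
    #|nb x l :&: nb a j :&: nb b (tr r j')|%:R.
Proof.
rewrite mxE; under eq_bigr do rewrite !EAE_entry -natrM.
rewrite -natr_sum -natrM; congr _%:R.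
rewrite -sum1_card big_distrr [RHS]big_mkcond /=.
apply: eq_bigr => c _; rewrite !inE -eq_tr /cell !xpair_eqE.
case: (r x c =P l) => [<- | _]; rewrite ?andbF ?muln0 //=.
by case: (r x a == i); case: (r a c == j); case: (r x c == l');
   case: (r c b == j'); case: (r x b == k).
Qed.

Lemma cell_constant_EAE t : cell_constant (EAE t).
Proof. by move=> a b a' b' e; rewrite !EAE_entry e. Qed.

Lemma cell_constant_EAE_mul t s :
  ~ forbidden_config -> cell_constant (EAE t *m EAE s).
Proof.
case: t s => [[i j] l] [[l' j'] k] nc a b a' b' e_cell.
rewrite !EAE_mul_entry; case: (e_cell) => ea _ eb; rewrite ea eb.
congr (_ * _%:R); apply/eqP/negPn/negP => /(count_mismatch_config e_cell).
exact: nc.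
Qed.

Lemma cell_constant1 : cell_constant 1%:M.
Proof.
case: Hsch => _ diag _ _ a b a' b' [_ eab _].
by rewrite !mxE -[a == b]diag -[a' == b']diag eab.
Qed.

Definition cell_val (M : 'M[F]_n.+1) (t : I * I * I) : F :=
  if [pick ab | cell ab.1 ab.2 == t] is Some ab then M ab.1 ab.2 else 0.

Lemma cell_constant_decomp M :
  cell_constant M -> M = \sum_t cell_val M t *: EAE t.
Proof.
move=> hM; apply/matrixP => a b; rewrite summxE (bigD1 (cell a b)) //= big1.
  rewrite mxE EAE_entry eqxx mulr1 addr0 /cell_val.
  case: pickP => [[a' b'] /= /eqP e | /(_ (a, b))]; last by rewrite /= eqxx.
  exact: hM (esym e).
by move=> t ne; rewrite mxE EAE_entry eq_sym (negbTE ne) mulr0.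
Qed.

Lemma cell_constant_scale c M : cell_constant M -> cell_constant (c *: M).
Proof. by move=> hM a b a' b' e; rewrite !mxE (hM _ _ _ _ e). Qed.

Lemma cell_constant_sum (J : finType) (G : J -> 'M[F]_n.+1) :
  (forall k, cell_constant (G k)) -> cell_constant (\sum_k G k).
Proof.
by move=> hG a b a' b' e; rewrite !summxE; apply: eq_bigr => k _; apply: hG.
Qed.

Lemma T0_cell_constant M : (M \in T0 r F x)%MS -> cell_constant M.
Proof.
case/memmx_sumsP => A_ -> memA; apply: cell_constant_sum => t.
have := memA t; rewrite genmxE => /sub_rVP[c /(canRL mxvecK) ->].
by rewrite linearZ /= mxvecK; apply/cell_constant_scale/cell_constant_EAE.
Qed.

Lemma cell_constant_T0 M : cell_constant M -> (M \in T0 r F x)%MS.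
Proof.
move/cell_constant_decomp => ->; apply/memmx_sumsP.
exists (fun t => cell_val M t *: EAE t) => // t.
by rewrite genmxE linearZ /= scalemx_sub.
Qed.

Lemma cell_constant_mul M N :
    (forall t s, cell_constant (EAE t *m EAE s)) ->
    cell_constant M -> cell_constant N ->
  cell_constant (M *m N).
Proof.
move=> cEE /cell_constant_decomp -> /cell_constant_decomp ->.
rewrite mulmx_suml; apply: cell_constant_sum => t.
rewrite -scalemxAl mulmx_sumr; apply/cell_constant_scale/cell_constant_sum => s.
by rewrite -scalemxAr; apply/cell_constant_scale/cEE.
Qed.

End Matrices.

End BasePoint.
End Scheme.

Theorem lemma4p9 (F : fieldType) (n d : nat)
    (r : 'I_n.+1 -> 'I_n.+1 -> 'I_d.+1)
    (Hsch : is_scheme r) (Hqt : quasi_thin r) (x : 'I_n.+1) :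
  unital_subalgebra (@T0 n d r F x) <->
  ~ (exists u v w y z : 'I_d.+1,
       [/\ valency r u = 2%N, valency r v = 2%N, valency r w = 2%N,
           valency r y = 2%N & valency r z = 2%N] /\
       [/\ pnum r u v w = 1%N, pnum r w y z = 1%N &
           #|cprod r (tr r u) z| = 1%N]).
Proof.
split=> [[_ closed] | nc].
  case=> u [v [w [y [z [[vu _ vw _ vz] [puv pwy cp]]]]]].
  have [a [b [b' [xa xb e_cell N1 N0]]]] :=
    config_count_mismatch Hsch x vu vw vz puv pwy cp.
  have EAE_T0 t : (EAE r x F t \in T0 r F x)%MS.
    by apply: cell_constant_T0 => //; apply: cell_constant_EAE.
  have /= xbb' := congr1 snd e_cell.
  have := T0_cell_constant (closed _ _ (EAE_T0 (u, v, w)) (EAE_T0 (w, y, z))).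
  move/(_ a b a b' e_cell).
  rewrite !(EAE_mul_entry Hsch) xa -xbb' xb !eqxx N1 N0 /= => /eqP.
  by rewrite mulr0 mulr1 oner_eq0.
split; first by apply: cell_constant_T0 => //; apply: cell_constant1.
move=> M N /T0_cell_constant cM /T0_cell_constant cN.
apply: cell_constant_T0 => //; apply: cell_constant_mul => // t s.
exact: (cell_constant_EAE_mul Hsch Hqt).
Qed.
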